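(* Let $\varphi$ be an $\mathrm{SLTL}$ formula whose standpoint symbols other than $*$ are $s_1,\dots,s_n$ (treated as propositional variables in $\mathrm{PTL}\times\mathbf{S5}$, distinct from those of $\varphi$). Let $t_2$ be the translation that is the identity on propositional variables, commutes with Boolean connectives and with $X$ and $U$, and satisfies $t_2(\Diamond_*\psi)=\Diamond t_2(\psi)$, $t_2(\Box_*\psi)=\Box t_2(\psi)$, $t_2(\Diamond_s\psi)=\Diamond(s\wedge t_2(\psi))$, $t_2(\Box_s\psi)=\Box(s\to t_2(\psi))$, and $t_2(s\preceq s')=\Box(s\to s')$ for standpoint symbols $s,s'$. Let $\chi_n=\bigwedge_{1\le i\le n}\Diamond s_i\wedge\Box\bigwedge_{1\le i\le n}(G s_i\vee G\neg s_i)$, where $G\psi$ abbreviates ''always in the future'' $\neg(\top\,U\,\neg\psi)$. Then $\varphi$ is $\mathrm{SLTL}$-satisfiable if and only if $\chi_n\wedge t_2(\varphi)$ is $\mathrm{PTL}\times\mathbf{S5}$-satisfiable.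
   Context: Fix a countably infinite set $\mathcal{P}$ of propositional variables and a countably infinite set $\mathcal{S}$ of standpoint symbols containing a distinguished universal standpoint symbol $*$. SLTL: formulae $\varphi ::= p \mid s \preceq s' \mid \neg\varphi \mid \varphi\wedge\varphi \mid \Diamond_s\varphi \mid \Box_s\varphi \mid X\varphi \mid \varphi\,U\,\varphi$ ($p\in\mathcal{P}$, $s,s'\in\mathcal{S}$). A model is $M=(\Pi,\lambda)$, $\Pi\neq\emptyset$ a set of traces $\sigma:\mathbb{N}\to 2^{\mathcal{P}}$, $\lambda:\mathcal{S}\to 2^{\Pi}\setminus\{\emptyset\}$ with $\lambda( * )=\Pi$. Semantics: $M,\sigma,i\models p$ iff $p\in\sigma(i)$; $M,\sigma,i\models s\preceq s'$ iff $\lambda(s)\subseteq\lambda(s')$; Boolean clauses as usual; $M,\sigma,i\models\Diamond_s\psi$ iff $M,\sigma',i\models\psi$ for some $\sigma'\in\lambda(s)$; $\Box_s$ dually with ''for all''; $M,\sigma,i\models X\psi$ iff $M,\sigma,i+1\models\psi$; $M,\sigma,i\models\psi\,U\,\chi$ iff there is $i'\ge i$ with $M,\sigma,i'\models\chi$ and $M,\sigma,i''\models\psi$ for all $i\le i''<i'$. $\varphi$ is SLTL-satisfiable iff $M,\sigma,0\models\varphi$ for some $M=(\Pi,\lambda)$ and $\sigma\in\Pi$. $\mathrm{PTL}\times\mathbf{S5}$: formulae $\varphi ::= p \mid \neg\varphi\mid\varphi\wedge\varphi\mid\Diamond\varphi\mid\Box\varphi\mid X\varphi\mid\varphi\,U\,\varphi$.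 A model is $M=(\mathbb{N}\times W,R,L)$ with $W\neq\emptyset$, $R$ an equivalence relation on $W$, $L:\mathbb{N}\times W\to 2^{\mathcal{P}}$. Semantics: $M,(n,w)\models p$ iff $p\in L(n,w)$; $\Diamond\psi$ (resp. $\Box\psi$) holds at $(n,w)$ iff $\psi$ holds at $(n,w')$ for some (resp. all) $w'$ with $wRw'$; $X\psi$ holds at $(n,w)$ iff $\psi$ holds at $(n+1,w)$; $\psi\,U\,\chi$ holds at $(n,w)$ iff there is $n'\ge n$ with $\chi$ at $(n',w)$ and $\psi$ at $(n'',w)$ for all $n\le n''<n'$. A formula is satisfiable iff it holds at some point of some model. *)

From Stdlib Require Import List Arith.
Import ListNotations.

Inductive stand : Type := Star | Sp (n : nat).

Inductive sltl : Type :=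
| SVar (p : nat)
| SPrec (s s' : stand)
| SNot (f : sltl)
| SAnd (f g : sltl)
| SDia (s : stand) (f : sltl)
| SBox (s : stand) (f : sltl)
| SX (f : sltl)
| SU (f g : sltl).

(** Traces: [sigma i p] means p is in sigma(i). *)
Definition trace := nat -> nat -> Prop.

Fixpoint ssat (lam : stand -> trace -> Prop) (f : sltl) (sigma : trace) (i : nat) : Prop :=
  match f with
  | SVar p => sigma i p
  | SPrec s s' => forall tau, lam s tau -> lam s' tau
  | SNot g => ~ ssat lam g sigma i
  | SAnd g h => ssat lam g sigma i /\ ssat lam h sigma i
  | SDia s g => exists sigma', lam s sigma' /\ ssat lam g sigma' i
  | SBox s g => forall sigma', lam s sigma' -> ssat lam g sigma' i
  | SX g => ssat lam g sigma (S i)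
  | SU g h => exists i', i <= i' /\ ssat lam h sigma i' /\
                 (forall i'', i <= i'' < i' -> ssat lam g sigma i'')
  end.

Definition sltl_model (Pi : trace -> Prop) (lam : stand -> trace -> Prop) : Prop :=
  (exists sigma, Pi sigma) /\
  (forall s, (forall tau, lam s tau -> Pi tau) /\ (exists tau, lam s tau)) /\
  (forall tau, lam Star tau <-> Pi tau).

Definition sltl_satisfiable (f : sltl) : Prop :=
  exists (Pi : trace -> Prop) (lam : stand -> trace -> Prop) (sigma : trace),
    sltl_model Pi lam /\ Pi sigma /\ ssat lam f sigma 0.

Inductive ptl (V : Type) : Type :=
| PVar (v : V)
| PNot (f : ptl V)
| PAnd (f g : ptl V)
| PDia (f : ptl V)
| PBox (f : ptl V)
| PX (f : ptl V)
| PU (f g : ptl V).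
Arguments PVar {V} v.
Arguments PNot {V} f.
Arguments PAnd {V} f g.
Arguments PDia {V} f.
Arguments PBox {V} f.
Arguments PX {V} f.
Arguments PU {V} f g.

Fixpoint psat {V W : Type} (R : W -> W -> Prop) (L : nat -> W -> V -> Prop)
    (f : ptl V) (n : nat) (w : W) : Prop :=
  match f with
  | PVar v => L n w v
  | PNot g => ~ psat R L g n w
  | PAnd g h => psat R L g n w /\ psat R L h n w
  | PDia g => exists w', R w w' /\ psat R L g n w'
  | PBox g => forall w', R w w' -> psat R L g n w'
  | PX g => psat R L g (S n) w
  | PU g h => exists n', n <= n' /\ psat R L h n' w /\
                (forall n'', n <= n'' < n' -> psat R L g n'' w)
  end.

Definition equivalence_rel {W : Type} (R : W -> W -> Prop) : Prop :=
  (forall x, R x x) /\ (forall x y, R x y -> R y x) /\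
  (forall x y z, R x y -> R y z -> R x z).

Definition ptl_satisfiable {V : Type} (f : ptl V) : Prop :=
  exists (W : Type) (R : W -> W -> Prop) (L : nat -> W -> V -> Prop) (n : nat) (w : W),
    equivalence_rel R /\ psat R L f n w.

(** * Translation. Target variables: [inl p] for the variable p of the SLTL
    formula, [inr k] for the standpoint symbol [Sp k]. *)
Definition tvar := (nat + nat)%type.

Definition ptrue : ptl tvar := PNot (PAnd (PVar (inl 0)) (PNot (PVar (inl 0)))).
Definition pimp (a b : ptl tvar) : ptl tvar := PNot (PAnd a (PNot b)).
Definition por (a b : ptl tvar) : ptl tvar := PNot (PAnd (PNot a) (PNot b)).
Definition pG (a : ptl tvar) : ptl tvar := PNot (PU ptrue (PNot a)).

Definition stand_atom (s : stand) : ptl tvar :=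
  match s with Star => ptrue | Sp k => PVar (inr k) end.

Fixpoint t2 (f : sltl) : ptl tvar :=
  match f with
  | SVar p => PVar (inl p)
  | SPrec s s' => PBox (pimp (stand_atom s) (stand_atom s'))
  | SNot g => PNot (t2 g)
  | SAnd g h => PAnd (t2 g) (t2 h)
  | SDia Star g => PDia (t2 g)
  | SDia (Sp k) g => PDia (PAnd (PVar (inr k)) (t2 g))
  | SBox Star g => PBox (t2 g)
  | SBox (Sp k) g => PBox (pimp (PVar (inr k)) (t2 g))
  | SX g => PX (t2 g)
  | SU g h => PU (t2 g) (t2 h)
  end.

Definition stand_syms (s : stand) : list nat :=
  match s with Star => [] | Sp k => [k] end.

Fixpoint syms (f : sltl) : list nat :=
  match f with
  | SVar _ => []
  | SPrec s s' => stand_syms s ++ stand_syms s'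
  | SNot g | SX g => syms g
  | SAnd g h | SU g h => syms g ++ syms h
  | SDia s g | SBox s g => stand_syms s ++ syms g
  end.

Definition symbols (f : sltl) : list nat := nodup Nat.eq_dec (syms f).

Definition bigand (l : list (ptl tvar)) : ptl tvar := fold_right PAnd ptrue l.

Definition chi (ks : list nat) : ptl tvar :=
  PAnd (bigand (map (fun k => PDia (PVar (inr k))) ks))
       (PBox (bigand (map (fun k => por (pG (PVar (inr k))) (pG (PNot (PVar (inr k))))) ks))).

From Stdlib Require Import List Arith Lia Classical.

(* Both directions rest on one correspondence: if the worlds of an S5 class are
   mapped onto the traces of a standpoint model so that propositional variables,
   standpoint atoms and [lambda] agree, then [t2 psi] holds at (i, x) exactly when
   [psi] holds on the trace of x at i.  From an SLTL model take the traces as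
   worlds, all related, with [s_k] true on lambda(s_k) at every instant.
   Conversely, [chi_n] makes each [s_k] time-independent and nonempty, so the
   traces of the worlds of a class form a standpoint model in which lambda(s_k)
   is the set of traces of the worlds where [s_k] holds. *)

Section PtlSemantics.
Context {W : Type} (R : W -> W -> Prop) (L : nat -> W -> tvar -> Prop).

Lemma psat_ptrue n w : psat R L ptrue n w.
Proof. simpl; tauto. Qed.

Lemma psat_pimp a b n w :
  psat R L (pimp a b) n w <-> (psat R L a n w -> psat R L b n w).
Proof. simpl; destruct (classic (psat R L b n w)); tauto. Qed.

Lemma psat_por a b n w :
  psat R L (por a b) n w <-> psat R L a n w \/ psat R L b n w.
Proof. simpl; destruct (classic (psat R L a n w)); tauto. Qed.

Lemma psat_pG a n w :
  psat R L (pG a) n w <-> (forall m, n <= m -> psat R L a m w).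
Proof.
  simpl; split.
  - intros Hnot m Hm; apply NNPP; intros Ha.
    apply Hnot; exists m; repeat split; auto; intros; tauto.
  - intros Hall [m [Hm [Ha _]]]; exact (Ha (Hall m Hm)).
Qed.

Lemma psat_bigand l n w :
  psat R L (bigand l) n w <-> (forall f, In f l -> psat R L f n w).
Proof.
  induction l as [|f l IHl]; simpl.
  - split; [intros _ g []|intros _; tauto].
  - rewrite IHl; split; [intros [Hf Hl] g [<-|Hg]; auto|intros H; split; auto].
Qed.

Lemma psat_G_or_G_not a n w :
  psat R L (por (pG a) (pG (PNot a))) n w <->
  (forall m, n <= m -> (psat R L a m w <-> psat R L a n w)).
Proof.
  rewrite psat_por, !psat_pG; simpl; split.
  - intros [Ha|Hna] m Hm; split; intros H; auto with arith.
    + exfalso; exact (Hna m Hm H).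
    + exfalso; exact (Hna n (le_n n) H).
  - intros Hconst; destruct (classic (psat R L a n w)) as [Ha|Hna];
      [left|right]; intros m Hm; rewrite Hconst; auto.
Qed.

Lemma psat_chi ks n w :
  psat R L (chi ks) n w <->
  (forall k, In k ks -> exists y, R w y /\ L n y (inr k)) /\
  (forall y, R w y -> forall k, In k ks ->
     forall m, n <= m -> (L m y (inr k) <-> L n y (inr k))).
Proof.
  unfold chi; cbn [psat]; rewrite psat_bigand; split.
  - intros [Hdia Hbox]; split.
    + intros k Hk; exact (Hdia _ (in_map (fun k => PDia (PVar (inr k))) _ _ Hk)).
    + intros y Hy k Hk.
      specialize (Hbox y Hy); rewrite psat_bigand in Hbox.
      exact (proj1 (psat_G_or_G_not _ _ _) (Hbox _ (in_map _ _ _ Hk))).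
  - intros [Hdia Hbox]; split.
    + intros f Hf; apply in_map_iff in Hf as [k [<- Hk]]; exact (Hdia k Hk).
    + intros y Hy; apply psat_bigand; intros f Hf.
      apply in_map_iff in Hf as [k [<- Hk]].
      apply psat_G_or_G_not; exact (Hbox y Hy k Hk).
Qed.

Lemma psat_t2_SDia s psi n w :
  psat R L (t2 (SDia s psi)) n w <->
  exists y, R w y /\ psat R L (stand_atom s) n y /\ psat R L (t2 psi) n y.
Proof.
  destruct s; simpl; [|reflexivity].
  split; [intros [y [Hy H]]|intros [y [Hy [_ H]]]]; exists y; tauto.
Qed.

Lemma psat_t2_SBox s psi n w :
  psat R L (t2 (SBox s psi)) n w <->
  forall y, R w y -> psat R L (stand_atom s) n y -> psat R L (t2 psi) n y.
Proof.
  destruct s; cbn [t2 psat].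
  - split; [intros H y Hy _|intros H y Hy]; auto using psat_ptrue.
  - setoid_rewrite psat_pimp; reflexivity.
Qed.

End PtlSemantics.

Lemma psat_shift {V W : Type} (R : W -> W -> Prop) (L : nat -> W -> V -> Prop) f n i w :
  psat R L f (n + i) w <-> psat R (fun m => L (n + m)) f i w.
Proof.
  revert i w; induction f as [v|f IHf|f IHf g IHg|f IHf|f IHf|f IHf|f IHf g IHg];
    intros i w; cbn [psat].
  - reflexivity.
  - rewrite IHf; reflexivity.
  - rewrite IHf, IHg; reflexivity.
  - setoid_rewrite IHf; reflexivity.
  - setoid_rewrite IHf; reflexivity.
  - rewrite <- IHf, Nat.add_succ_r; reflexivity.
  - split.
    + intros [m [Hm [Hg Hf]]]; exists (m - n); split; [lia|split].
      * apply IHg; replace (n + (m - n)) with m by lia; exact Hg.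
      * intros j Hj; apply IHf, Hf; lia.
    + intros [m [Hm [Hg Hf]]]; exists (n + m); split; [lia|split].
      * apply IHg, Hg.
      * intros j Hj; replace j with (n + (j - n)) by lia; apply IHf, Hf; lia.
Qed.

Fixpoint max_var (f : sltl) : nat :=
  match f with
  | SVar p => p
  | SPrec _ _ => 0
  | SNot g | SX g | SDia _ g | SBox _ g => max_var g
  | SAnd g h | SU g h => Nat.max (max_var g) (max_var h)
  end.

Section Correspondence.
Context {W : Type} (R : W -> W -> Prop) (L : nat -> W -> tvar -> Prop)
  (lam : stand -> trace -> Prop) (tr : W -> trace) (D : W -> Prop)
  (N : nat) (ks : list nat).

Hypothesis D_class : forall x y, D x -> (R x y <-> D y).
Hypothesis tr_var : forall x i p, D x -> p < N -> (L i x (inl p) <-> tr x i p).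
Hypothesis tr_stand : forall s x i, D x -> incl (stand_syms s) ks ->
  (psat R L (stand_atom s) i x <-> lam s (tr x)).
Hypothesis lam_in_image : forall s tau, lam s tau -> exists x, D x /\ tau = tr x.

Lemma t2_correct psi : max_var psi < N -> incl (syms psi) ks ->
  forall i x, D x -> (psat R L (t2 psi) i x <-> ssat lam psi (tr x) i).
Proof.
  induction psi as [p|s s'|psi IH|psi1 IH1 psi2 IH2|s psi IH|s psi IH|psi IH
    |psi1 IH1 psi2 IH2]; intros Hvar Hsyms i x Dx; cbn [max_var syms] in Hvar, Hsyms.
  - apply tr_var; auto.
  - apply incl_app_inv in Hsyms as [Hs Hs']; cbn [t2 psat ssat].
    setoid_rewrite psat_pimp; split.
    + intros H tau Hl; destruct (lam_in_image _ _ Hl) as [y [Dy ->]].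
      rewrite <- tr_stand by auto; apply H; [apply D_class; auto|].
      rewrite tr_stand by auto; exact Hl.
    + intros H y Rxy; assert (Dy : D y) by (apply (D_class x); auto).
      rewrite !tr_stand by auto; apply H.
  - cbn [t2 psat ssat]; rewrite IH; tauto.
  - apply incl_app_inv in Hsyms as [Hs1 Hs2]; cbn [t2 psat ssat].
    rewrite IH1, IH2 by (auto; lia); reflexivity.
  - apply incl_app_inv in Hsyms as [Hs Hpsi]; rewrite psat_t2_SDia; cbn [ssat]; split.
    + intros [y [Rxy [Hy H]]]; assert (Dy : D y) by (apply (D_class x); auto).
      exists (tr y); rewrite <- (tr_stand s y i), <- IH by auto; auto.
    + intros [tau [Hl H]]; destruct (lam_in_image _ _ Hl) as [y [Dy ->]].
      exists y; rewrite (tr_stand s y i), IH, D_class by auto; auto.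
  - apply incl_app_inv in Hsyms as [Hs Hpsi]; rewrite psat_t2_SBox; cbn [ssat]; split.
    + intros H tau Hl; destruct (lam_in_image _ _ Hl) as [y [Dy ->]].
      rewrite <- IH by auto; apply H; [apply D_class|rewrite (tr_stand s y i)]; auto.
    + intros H y Rxy; assert (Dy : D y) by (apply (D_class x); auto).
      rewrite (tr_stand s y i), IH by auto; auto.
  - cbn [t2 psat ssat]; apply IH; auto.
  - apply incl_app_inv in Hsyms as [Hs1 Hs2]; cbn [t2 psat ssat].
    setoid_rewrite IH1; [|lia|auto|auto]. setoid_rewrite IH2; [reflexivity|lia|auto|auto].
Qed.

End Correspondence.

Definition trace_valuation (lam : stand -> trace -> Prop) (m : nat) (tau : trace)
    (v : tvar) : Prop :=
  match v with inl p => tau m p | inr k => lam (Sp k) tau end.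

Lemma sltl_satisfiable_ptl phi :
  sltl_satisfiable phi -> ptl_satisfiable (PAnd (chi (symbols phi)) (t2 phi)).
Proof.
  intros (Pi & lam & sigma & [_ [Hlam Hstar]] & Hsigma & Hphi).
  set (W := {tau | Pi tau}).
  set (R := fun _ _ : W => True).
  set (L := fun m (x : W) => trace_valuation lam m (proj1_sig x)).
  assert (lam_Pi : forall s tau, lam s tau -> Pi tau) by (intros s; apply Hlam).
  exists W, R, L, 0, (exist _ sigma Hsigma).
  split; [repeat split|split].
  - apply psat_chi; split; [|reflexivity].
    intros k _; destruct (proj2 (Hlam (Sp k))) as [tau Hk].
    exists (exist _ tau (lam_Pi _ _ Hk)); split; [exact I|exact Hk].
  - apply (t2_correct R L lam (@proj1_sig _ _) (fun _ => True) (S (max_var phi)) (syms phi));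
      auto using incl_refl.
    + unfold R; tauto.
    + reflexivity.
    + intros [|k] x i _ _; cbn [stand_atom]; [|reflexivity].
      split; [intros _; apply Hstar, proj2_sig|intros _; apply psat_ptrue].
    + intros s tau Hl; exists (exist _ tau (lam_Pi _ _ Hl)); auto.
Qed.

Section ClassModel.
Context {W : Type} (R : W -> W -> Prop) (L : nat -> W -> tvar -> Prop)
  (N : nat) (ks : list nat) (w : W).

(* Variables below [N] carry the valuation of the world; variable [N + k] at
   time 0 records [s_k], so that a trace determines the standpoints of its world. *)
Definition world_trace (y : W) : trace :=
  fun i p => if p <? N then L i y (inl p) else L 0 y (inr (p - N)).

Definition class_traces (tau : trace) : Prop := exists y, R w y /\ tau = world_trace y.

(* Symbols outside [ks] are sent to the whole class, keeping lambda nonempty. *)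
Definition class_lambda (s : stand) (tau : trace) : Prop :=
  class_traces tau /\
  match s with Star => True | Sp k => In k ks -> tau 0 (N + k) end.

Lemma world_trace_var y i p : p < N -> world_trace y i p = L i y (inl p).
Proof. intros Hp; unfold world_trace; rewrite (proj2 (Nat.ltb_lt p N) Hp); reflexivity. Qed.

Lemma world_trace_stand y k : world_trace y 0 (N + k) = L 0 y (inr k).
Proof.
  unfold world_trace; rewrite (proj2 (Nat.ltb_ge (N + k) N)) by lia.
  now replace (N + k - N) with k by lia.
Qed.

Lemma class_sltl_model :
  equivalence_rel R -> (forall k, In k ks -> exists y, R w y /\ L 0 y (inr k)) ->
  sltl_model class_traces class_lambda.
Proof.
  intros [Rrefl _] Hdia.
  assert (Hw : class_traces (world_trace w)) by (exists w; auto).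
  split; [eauto|split].
  - intros s; split; [intros tau []; auto|].
    destruct s as [|k]; [exists (world_trace w); split; auto|].
    destruct (classic (In k ks)) as [Hk|Hk].
    + destruct (Hdia k Hk) as [y [Ry Hy]].
      exists (world_trace y); split; [exists y; auto|].
      rewrite world_trace_stand; auto.
    + exists (world_trace w); split; [auto|tauto].
  - intros tau; unfold class_lambda; tauto.
Qed.

End ClassModel.

Lemma ptl_satisfiable_sltl phi :
  ptl_satisfiable (PAnd (chi (symbols phi)) (t2 phi)) -> sltl_satisfiable phi.
Proof.
  intros (W & R & L & n & w & HR & Hchi & Hphi).
  rewrite <- (Nat.add_0_r n), psat_shift in Hchi, Hphi.
  set (L' := fun m => L (n + m)) in Hchi, Hphi.
  apply psat_chi in Hchi as [Hdia Hconst].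
  set (N := S (max_var phi)); set (ks := symbols phi).
  pose proof HR as [Rrefl [Rsym Rtrans]].
  assert (Rclass : forall x y, R w x -> (R x y <-> R w y)) by (split; eauto).
  exists (class_traces R L' N w), (class_lambda R L' N ks w), (world_trace L' N w).
  split; [apply class_sltl_model; auto|split; [exists w; auto|]].
  apply (t2_correct R L' _ (world_trace L' N) (R w) N ks); auto.
  - intros x i p _ Hp; rewrite world_trace_var; auto; reflexivity.
  - intros [|k] y i Ry Hk; cbn [stand_atom psat]; unfold class_lambda.
    + split; [intros _; split; [exists y|]|intros _; apply psat_ptrue]; auto.
    + rewrite world_trace_stand, (Hconst y Ry k (Hk k (or_introl eq_refl)) i) by lia.
      split; [intros H; split; [exists y|]|intros [_ H]; apply H, Hk]; auto; now left.
  - intros s tau [[y [Ry ->]] _]; eauto.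
  - intros k; apply nodup_In.
Qed.

Theorem lemma2 (phi : sltl) :
  sltl_satisfiable phi <-> ptl_satisfiable (PAnd (chi (symbols phi)) (t2 phi)).
Proof. split; [apply sltl_satisfiable_ptl|apply ptl_satisfiable_sltl]. Qed.
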